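(* Let $S$ be a connected graded reduced affine monoid and $R$ a commutative ring with identity. Then $c_{\mathrm{gr}}(S)=\mu(\ker(\pi_R))$, where the polynomial ring $R[x_a\mid a\in\mathcal{A}(S)]$ is graded by $\deg x_a=|a|$, so that $\pi_R$ is a homomorphism of graded algebras.
   Context: A monoid is a commutative cancellative semigroup with identity; affine means a finitely generated submonoid of a finitely generated free abelian group; reduced means the identity is the only unit. $S$ is graded if $S=\bigsqcup_{d\in\mathbb{N}_0}S_d$ with $S_dS_e\subseteq S_{d+e}$; $|s|=d$ for $s\in S_d$; connected graded means $S_0=\{1\}$. $\mathcal{A}(S)$ is the finite set of atoms, $a^{\alpha}=\prod_a a^{\alpha(a)}$. $R[S]$ is the semigroup ring, graded by the grading of $S$, and $\pi_R:R[x_a\mid a\in\mathcal{A}(S)]\to R[S]$ is the $R$-algebra homomorphism $x^{\alpha}\mapsto a^{\alpha}$. For an ideal $I$ of the graded polynomial ring, $\mu(I)$ is the minimal non-negative integer $d$ such that $I$ is generated by elements of degree at most $d$. The graded catenary degree: set $|\alpha|_{\mathrm{gr}}=\sum_a\alpha(a)|a|$, $\gcd(\alpha,\gamma)(a)=\min\{\alpha(a),\gamma(a)\}$, $d_{\mathrm{gr}}(\alpha,\gamma)=\max\{|\alpha-\gcd(\alpha,\gamma)|_{\mathrm{gr}},|\gamma-\gcd(\alpha,\gamma)|_{\mathrm{gr}}\}$; $c_{\mathrm{gr}}(S)$ is the minimal $d$ such that whenever $a^{\alpha}=a^{\gamma}$ there is a sequence $\alpha=\alpha^{(0)},\dots,\alpha^{(k)}=\gamma$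 with $a^{\alpha^{(j)}}=a^{\alpha^{(j+1)}}$ and $d_{\mathrm{gr}}(\alpha^{(j)},\alpha^{(j+1)})\le d$ for all $j$. *)

From HB Require Import structures.
From mathcomp Require Import all_boot all_order all_algebra.
From mathcomp.multinomials Require Import mpoly.
Set Implicit Arguments. Unset Strict Implicit. Unset Printing Implicit Defensive.
Import Order.TTheory GRing.Theory Num.Theory.
Local Open Scope ring_scope.

(* A monoid S is modelled as a subset of the free abelian group Z^n = 'rV[int]_n. *)
Section Monoid.
Variable n : nat.
Implicit Types (S : 'rV[int]_n -> Prop) (x y : 'rV[int]_n).

Definition submonoid S := S 0 /\ (forall x y, S x -> S y -> S (x + y)).

Definition affine S := submonoid S /\
  exists (g : nat) (gen : 'I_g -> 'rV[int]_n),
    forall x, S x <-> exists c : 'I_g -> nat, x = \sum_(i < g) (gen i) *+ c i.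

Definition is_unit S x := S x /\ S (- x).

Definition reduced S := forall x, is_unit S x -> x = 0.

(* grading: S = disjoint union of S_d, d = deg x, with S_d S_e ⊆ S_{d+e} *)
Definition graded S (deg : 'rV[int]_n -> nat) :=
  forall x y, S x -> S y -> deg (x + y) = (deg x + deg y)%N.

Definition connected_graded S (deg : 'rV[int]_n -> nat) :=
  graded S deg /\ forall x, S x -> deg x = 0%N -> x = 0.

Definition is_atom S a := S a /\ ~ is_unit S a /\
  forall b c, S b -> S c -> a = b + c -> is_unit S b \/ is_unit S c.

Variables (deg : 'rV[int]_n -> nat) (k : nat) (atom : 'I_k -> 'rV[int]_n).

Definition fact_val (al : 'X_{1..k}) : 'rV[int]_n := \sum_(i < k) atom i *+ al i.

Definition gr_size (al : 'X_{1..k}) : nat := (\sum_(i < k) al i * deg (atom i))%N.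

Definition gr_diff (al ga : 'X_{1..k}) : nat :=
  (\sum_(i < k) (al i - minn (al i) (ga i)) * deg (atom i))%N.

Definition d_gr (al ga : 'X_{1..k}) : nat := maxn (gr_diff al ga) (gr_diff ga al).

Definition catenary_bound (d : nat) : Prop :=
  forall al ga : 'X_{1..k}, fact_val al = fact_val ga ->
    exists chain : seq 'X_{1..k},
      path (fun b c => (fact_val b == fact_val c) && (d_gr b c <= d)%N) al chain
      /\ last al chain = ga.

Definition is_cat_gr (d : nat) : Prop :=
  catenary_bound d /\ forall d', catenary_bound d' -> (d <= d')%N.

Variable R : comNzRingType.

(* pi_R : R[x_a] -> R[S]; an element of R[S] is represented by its coefficient
   function on S ⊆ Z^n (coefficient of the basis element s). *)
Definition piR (f : {mpoly R[k]}) (s : 'rV[int]_n) : R :=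
  \sum_(m <- msupp f | fact_val m == s) f@_m.

Definition ker_piR (f : {mpoly R[k]}) : Prop := forall s, piR f s = 0.

Definition homog_of (e : nat) (f : {mpoly R[k]}) : Prop :=
  forall m, m \in msupp f -> gr_size m = e.

Definition ideal_generated_by (I G : {mpoly R[k]} -> Prop) : Prop :=
  (forall g, G g -> I g) /\
  forall f, I f <-> exists s : seq ({mpoly R[k]} * {mpoly R[k]}),
      (forall p, p \in s -> G p.2) /\ f = \sum_(p <- s) p.1 * p.2.

Definition gen_deg_le (I : {mpoly R[k]} -> Prop) (d : nat) : Prop :=
  ideal_generated_by I (fun g => I g /\ exists e, (e <= d)%N /\ homog_of e g).

Definition is_mu (I : {mpoly R[k]} -> Prop) (d : nat) : Prop :=
  gen_deg_le I d /\ forall d', gen_deg_le I d' -> (d <= d')%N.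

End Monoid.

From HB Require Import structures.
From mathcomp Require Import all_boot all_order all_algebra.
From mathcomp.multinomials Require Import mpoly.
From mathcomp Require Import zify.
From Stdlib Require Import Classical ClassicalEpsilon.
Set Implicit Arguments. Unset Strict Implicit. Unset Printing Implicit Defensive.
Import Order.TTheory GRing.Theory Num.Theory.
Local Open Scope ring_scope.

(* Dickson's lemma gives a finite catenary bound: every pair (al, ga) of
   distinct factorizations of one element dominates one of finitely many
   minimal such pairs (be, be'), and the step al = be + al' -> be' + al' leaves
   the smaller pair (al', ga - be') to induction.  A step al -> ga of a chain
   yields the kernel element x^g (x^(al-g) - x^(ga-g)), g = gcd(al, ga), whose
   second factor is homogeneous of degree at most d_gr(al, ga); and every
   kernel element is a combination of binomials x^al - x^ga with a^al = a^ga,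
   each a telescoping sum along a chain.  So a catenary bound d makes the
   kernel generated in degree <= d.  Conversely, if the kernel is generated in
   degree <= d, the linear form x^m |-> [m is reachable from al by steps of
   length <= d] vanishes on every multiple of a homogeneous generator, since
   monomials of such a generator with a common image in S are one step apart;
   so it vanishes on x^al - x^ga, and ga is reachable. *)

Definition asbool (P : Prop) : bool :=
  if excluded_middle_informative P then true else false.

Lemma asboolP (P : Prop) : reflect P (asbool P).
Proof. by rewrite /asbool; case: excluded_middle_informative => p; constructor. Qed.

Lemma ex_least_nat (P : nat -> Prop) :
  (exists d, P d) -> exists d, P d /\ forall d', P d' -> (d <= d')%N.
Proof.
case=> d0 /asboolP P_d0.
case: (@ex_minnP (fun d => asbool (P d)) (ex_intro _ d0 P_d0)) => d /asboolP P_d least_d.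
by exists d; split => // d' /asboolP /least_d.
Qed.

Section LinearFunctional.
Variables (R : comNzRingType) (k : nat).
Implicit Types (phi : 'X_{1..k} -> R) (f g p : {mpoly R[k]}).

Definition mfunctional phi f : R := \sum_(m <- msupp f) phi m * f@_m.

Lemma eq_mfunctional phi psi f :
  phi =1 psi -> mfunctional phi f = mfunctional psi f.
Proof. by move=> eq_phi; apply: eq_bigr => m _; rewrite eq_phi. Qed.

Lemma mfunctionalE phi f (r : seq 'X_{1..k}) : uniq r -> {subset msupp f <= r} ->
  mfunctional phi f = \sum_(m <- r) phi m * f@_m.
Proof.
move=> r_uniq f_r; rewrite (bigID (mem (msupp f))) /= [X in _ + X]big1 ?addr0; last first.
  by move=> m; rewrite -mcoeff_eq0 => /eqP ->; rewrite mulr0.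
rewrite -big_filter; apply: perm_big; apply: uniq_perm.
- exact: msupp_uniq.
- exact: filter_uniq.
by move=> m; rewrite mem_filter; case f_m: (m \in msupp f); rewrite //= f_r.
Qed.

Lemma mfunctional0 phi : mfunctional phi 0 = 0.
Proof. by rewrite /mfunctional msupp0 big_nil. Qed.

Lemma mfunctionalD phi f g :
  mfunctional phi (f + g) = mfunctional phi f + mfunctional phi g.
Proof.
pose r := undup (msupp f ++ msupp g).
have r_uniq : uniq r by exact: undup_uniq.
rewrite (@mfunctionalE _ (f + g) r) //; last by move=> m /msuppD_le; rewrite mem_undup.
rewrite (@mfunctionalE _ f r) //; last by move=> m f_m; rewrite mem_undup mem_cat f_m.
rewrite (@mfunctionalE _ g r) //; last by move=> m g_m; rewrite mem_undup mem_cat g_m orbT.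
by rewrite -big_split; apply: eq_bigr => m _; rewrite mcoeffD mulrDr.
Qed.

Lemma mfunctional_sum phi (I : Type) (r : seq I) (F : I -> {mpoly R[k]}) :
  mfunctional phi (\sum_(i <- r) F i) = \sum_(i <- r) mfunctional phi (F i).
Proof. exact: (big_morph _ (mfunctionalD phi) (mfunctional0 phi)). Qed.

Lemma mfunctionalZ phi c f : mfunctional phi (c *: f) = c * mfunctional phi f.
Proof.
rewrite (mfunctionalE _ (msupp_uniq f) (@msuppZ_le _ _ c f)) /mfunctional mulr_sumr.
by apply: eq_bigr => m _; rewrite mcoeffZ mulrCA.
Qed.

Lemma mfunctionalB phi f g :
  mfunctional phi (f - g) = mfunctional phi f - mfunctional phi g.
Proof. by rewrite mfunctionalD -scaleN1r mfunctionalZ mulN1r. Qed.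

Lemma mfunctionalX phi m : mfunctional phi 'X_[m] = phi m.
Proof. by rewrite /mfunctional msuppX big_seq1 mcoeffX eqxx mulr1. Qed.

Lemma mfunctionalXM phi u g :
  mfunctional phi ('X_[u] * g) = mfunctional (fun m => phi (u + m)%MM) g.
Proof.
rewrite {1}(mpolyE g) mulr_sumr mfunctional_sum; apply: eq_bigr => m _.
by rewrite -scalerAr -mpolyXD mfunctionalZ mfunctionalX mulrC.
Qed.

Lemma mfunctionalM_eq0 phi p g :
  (forall u, mfunctional (fun m => phi (u + m)%MM) g = 0) -> mfunctional phi (p * g) = 0.
Proof.
move=> shifts_g0; rewrite (mpolyE p) mulr_suml mfunctional_sum big1 // => u _.
by rewrite -scalerAl mfunctionalZ mfunctionalXM shifts_g0 mulr0.
Qed.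

End LinearFunctional.

Section Dickson.
Variable T : finType.
Implicit Types (x y : {ffun T -> nat}) (P : {ffun T -> nat} -> Prop).

Definition finite_basis P (L : seq {ffun T -> nat}) :=
  (forall y, y \in L -> P y) /\
  forall x, P x -> exists2 y, y \in L & forall t, (y t <= x t)%N.

Lemma finite_basis_cover (I : eqType) (s : seq I) (Q : I -> {ffun T -> nat} -> Prop) P :
  (forall x, P x -> exists2 i, i \in s & Q i x) ->
  (forall i, i \in s -> exists L, finite_basis (fun x => P x /\ Q i x) L) ->
  exists L, finite_basis P L.
Proof.
move=> P_cover Q_bases.
have [Ls Ls_bases] : exists Ls : I -> seq {ffun T -> nat},
    forall i, i \in s -> finite_basis (fun x => P x /\ Q i x) (Ls i).
  apply: (ClassicalEpsilon.choice (fun i L => i \in s -> finite_basis _ L)) => i.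
  by have [/Q_bases [L]|_] := boolP (i \in s); [exists L | exists [::]].
exists (flatten [seq Ls i | i <- s]); split.
  by move=> y /flattenP [_ /mapP [i i_s ->] y_i]; case: ((Ls_bases i i_s).1 y y_i).
move=> x P_x; have [i i_s Q_x] := P_cover x P_x.
have [y y_i le_yx] := (Ls_bases i i_s).2 x (conj P_x Q_x).
by exists y => //; apply/flattenP; exists (Ls i) => //; apply: map_f.
Qed.

Lemma dickson_fixed (J : {set T}) P :
  (forall x y, P x -> P y -> {in ~: J, x =1 y}) -> exists L, finite_basis P L.
Proof.
have [m] := ubnP #|J|; elim: m J P => // m IH J P card_J fixed.
have [[p0 P_p0]|noP] := classic (exists x, P x); last first.
  by exists [::]; split => // x P_x; case: noP; exists x.
pose N := (\max_t p0 t)%N.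
pose s := [seq tv <- enum {: T * 'I_N} | tv.1 \in J].
pose P' x := P x /\ ~ (forall t, p0 t <= x t)%N.
have [L' [L'_P' L'_cover]] : exists L', finite_basis P' L'.
  apply: (@finite_basis_cover _ s (fun tv x => x tv.1 = val tv.2)).
    move=> x [P_x /not_all_ex_not [t /negP]]; rewrite -ltnNge => lt_xt.
    have t_J : t \in J.
      by apply: contraLR lt_xt => t_J; rewrite (fixed x p0) ?ltnn ?inE.
    have lt_xN : (x t < N)%N := leq_trans lt_xt (leq_bigmax t).
    by exists (t, Ordinal lt_xN); rewrite // mem_filter t_J mem_enum.
  move=> [t v]; rewrite mem_filter /= => /andP [t_J _].
  apply: (IH (J :\ t)); first by rewrite -ltnS (leq_trans _ card_J) // (cardsD1 t J) t_J.
  move=> x y [[P_x _] x_t] [[P_y _] y_t] t'; rewrite !inE negb_and negbK.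
  case/orP => [/eqP -> | t'_J]; first by rewrite x_t y_t.
  by apply: fixed; rewrite ?inE.
exists (p0 :: L'); split.
  by move=> y; rewrite inE => /orP [/eqP -> | /L'_P' []].
move=> x P_x; have [le_p0x | not_le] := classic (forall t, p0 t <= x t)%N.
  by exists p0; rewrite ?mem_head.
by have [y y_L' le_yx] := L'_cover x (conj P_x not_le); exists y; rewrite // inE y_L' orbT.
Qed.

Lemma dickson P : exists L, finite_basis P L.
Proof. by apply: (@dickson_fixed setT) => x y _ _ t; rewrite !inE. Qed.

End Dickson.

Section Factorizations.
Variables (n k : nat) (deg : 'rV[int]_n -> nat) (atom : 'I_k -> 'rV[int]_n).
Implicit Types (a b c u m : 'X_{1..k}).

Lemma fact_valD u m : fact_val atom (u + m)%MM = fact_val atom u + fact_val atom m.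
Proof. by rewrite /fact_val -big_split; apply: eq_bigr => i _; rewrite mnmDE mulrnDr. Qed.

Definition mgcd b c : 'X_{1..k} := [multinom minn (b i) (c i) | i < k].

Lemma mgcdC b c : mgcd b c = mgcd c b.
Proof. by apply/mnmP => i; rewrite !mnmE minnC. Qed.

Lemma lem_mgcd b c : (mgcd b c <= b)%MM.
Proof. by apply/mnm_lepP => i; rewrite mnmE geq_minl. Qed.

Lemma gr_diffE b c : gr_diff deg atom b c = gr_size deg atom (b - mgcd b c)%MM.
Proof. by apply: eq_bigr => i _; rewrite mnmBE mnmE. Qed.

Lemma d_grDl u b c : d_gr deg atom (u + b)%MM (u + c)%MM = d_gr deg atom b c.
Proof.
have gr_diffDl b' c' : gr_diff deg atom (u + b')%MM (u + c')%MM = gr_diff deg atom b' c'.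
  by apply: eq_bigr => i _; rewrite !mnmDE -addn_minr subnDl.
by rewrite /d_gr !gr_diffDl.
Qed.

Lemma d_gr_le_max b c :
  (d_gr deg atom b c <= maxn (gr_size deg atom b) (gr_size deg atom c))%N.
Proof.
have gr_diff_le b' c' : (gr_diff deg atom b' c' <= gr_size deg atom b')%N.
  by apply: leq_sum => i _; rewrite leq_mul2r leq_subr orbT.
by rewrite geq_max !leq_max !gr_diff_le orbT.
Qed.

Definition cat_step d b c :=
  (fact_val atom b == fact_val atom c) && (d_gr deg atom b c <= d)%N.

Lemma cat_stepDl d u b c : cat_step d (u + b)%MM (u + c)%MM = cat_step d b c.
Proof. by rewrite /cat_step !fact_valD d_grDl (inj_eq (addrI _)). Qed.

Lemma cat_path_shift d u a s :
  path (cat_step d) a s -> path (cat_step d) (u + a)%MM [seq (u + b)%MM | b <- s].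
Proof. by rewrite path_map; apply: sub_path => b c /=; rewrite cat_stepDl. Qed.

Lemma cat_step_gr_size d b c : fact_val atom b = fact_val atom c ->
  (gr_size deg atom b <= d)%N -> (gr_size deg atom c <= d)%N -> cat_step d b c.
Proof.
move=> fv_bc le_bd le_cd; rewrite /cat_step fv_bc eqxx.
by rewrite (leq_trans (d_gr_le_max b c)) // geq_max le_bd.
Qed.

Definition mpair_ffun a c : {ffun bool * 'I_k -> nat} :=
  [ffun t => if t.1 then a t.2 else c t.2].
Definition ffun_mfst (y : {ffun bool * 'I_k -> nat}) : 'X_{1..k} :=
  [multinom y (true, i) | i < k].
Definition ffun_msnd (y : {ffun bool * 'I_k -> nat}) : 'X_{1..k} :=
  [multinom y (false, i) | i < k].

Lemma mpair_ffunK1 a c : ffun_mfst (mpair_ffun a c) = a.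
Proof. by apply/mnmP => i; rewrite mnmE ffunE. Qed.

Lemma mpair_ffunK2 a c : ffun_msnd (mpair_ffun a c) = c.
Proof. by apply/mnmP => i; rewrite mnmE ffunE. Qed.

Lemma catenary_bound_exists : exists d, catenary_bound deg atom d.
Proof.
pose P y :=
  fact_val atom (ffun_mfst y) = fact_val atom (ffun_msnd y) /\ ffun_mfst y != ffun_msnd y.
have [L [L_P L_min]] := dickson P.
pose D := (\max_(y <- L) d_gr deg atom (ffun_mfst y) (ffun_msnd y))%N.
suff chain_ex a c : fact_val atom a = fact_val atom c ->
    exists ch, path (cat_step D) a ch /\ last a ch = c.
  by exists D => a c /chain_ex.
have [N] := ubnP (mdeg a + mdeg c); elim: N a c => // N IH a c size_ac fv_ac.
have [<-|neq_ac] := eqVneq a c; first by exists [::].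
have P_ac : P (mpair_ffun a c) by rewrite /P mpair_ffunK1 mpair_ffunK2.
have [y y_L le_y] := L_min _ P_ac; have [fv_y neq_y] := L_P y y_L.
set b1 := ffun_mfst y in fv_y neq_y *; set b2 := ffun_msnd y in fv_y neq_y *.
have le_b1a : (b1 <= a)%MM.
  by apply/mnm_lepP => i; move: (le_y (true, i)); rewrite ffunE mnmE.
have le_b2c : (b2 <= c)%MM.
  by apply/mnm_lepP => i; move: (le_y (false, i)); rewrite ffunE mnmE.
set a' := (a - b1)%MM; set c' := (c - b2)%MM.
have a_eq : a = (b1 + a')%MM by rewrite addmC submK.
have c_eq : c = (b2 + c')%MM by rewrite addmC submK.
have fv_a'c' : fact_val atom a' = fact_val atom c'.
  by apply: (@addrI _ (fact_val atom b1)); rewrite -fact_valD -a_eq fv_ac c_eq fact_valD fv_y.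
have size_a'c' : (mdeg a' + mdeg c' < N)%N.
  have : (0 < mdeg b1 + mdeg b2)%N.
    rewrite lt0n -mdegD mdeg_eq0 mnmD_eq0.
    by apply: contra neq_y => /andP [/eqP -> /eqP ->].
  move: size_ac; rewrite {1}a_eq {1}c_eq !mdegD; lia.
have [ch [path_ch last_ch]] := IH a' c' size_a'c' fv_a'c'.
exists ((b2 + a')%MM :: [seq (b2 + x)%MM | x <- ch]); split; last first.
  by rewrite /= last_map last_ch -c_eq.
rewrite /= cat_path_shift // andbT {1}a_eq ![(_ + a')%MM]addmC cat_stepDl.
by rewrite /cat_step fv_y eqxx; apply: leq_bigmax_seq.
Qed.

End Factorizations.

Section Grading.
Variables (n : nat) (S : 'rV[int]_n -> Prop) (deg : 'rV[int]_n -> nat).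
Hypotheses (S_monoid : submonoid S) (S_graded : graded S deg).

Lemma graded_muln a j : S a -> S (a *+ j) /\ deg (a *+ j) = (j * deg a)%N.
Proof.
case: S_monoid => S0 SD S_a; elim: j => [|j [S_aj deg_aj]].
  rewrite mulr0n mul0n; split => //; have := S_graded S0 S0; rewrite addr0.
  by move=> /eqP; rewrite -{1}[deg 0]addn0 eqn_add2l eq_sym => /eqP.
by rewrite mulrS; split; [apply: SD | rewrite S_graded // deg_aj mulSn].
Qed.

Lemma graded_deg_fact_val k (atom : 'I_k -> 'rV[int]_n) : (forall i, S (atom i)) ->
  forall m, deg (fact_val atom m) = gr_size deg atom m.
Proof.
case: S_monoid => S0 SD S_atom m.
suff [] : S (fact_val atom m) /\ deg (fact_val atom m) = gr_size deg atom m by [].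
apply: (big_ind2 (fun x e => S x /\ deg x = e)) => [|x1 e1 x2 e2 [S1 <-] [S2 <-]|i _].
- exact: (graded_muln 0 S0).
- by split; [apply: SD | apply: S_graded].
- exact: graded_muln.
Qed.

End Grading.

Section Kernel.
Variables (n k : nat) (deg : 'rV[int]_n -> nat) (atom : 'I_k -> 'rV[int]_n).
Variable R : comNzRingType.
Implicit Types (f g p : {mpoly R[k]}) (a b u m : 'X_{1..k}).
Local Notation ker := (@ker_piR n k atom R).

Lemma piR_mfunctional f s :
  piR atom f s = mfunctional (fun m => (fact_val atom m == s)%:R) f.
Proof.
rewrite /piR /mfunctional big_mkcond; apply: eq_bigr => m _.
by case: (_ == _); rewrite ?mul1r ?mul0r.
Qed.

Lemma ker_piRB f g : ker f -> ker g -> ker (f - g).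
Proof.
move=> ker_f ker_g s.
by rewrite piR_mfunctional mfunctionalB -!piR_mfunctional ker_f ker_g subr0.
Qed.

Lemma ker_piRM p f : ker f -> ker (p * f).
Proof.
move=> ker_f s; rewrite piR_mfunctional; apply: mfunctionalM_eq0 => u.
rewrite -[RHS](ker_f (s - fact_val atom u)) piR_mfunctional; apply: eq_mfunctional => m.
by rewrite fact_valD [in RHS]eq_sym subr_eq eq_sym addrC.
Qed.

Lemma ker_piR_binomial a b : fact_val atom a = fact_val atom b -> ker ('X_[a] - 'X_[b]).
Proof. by move=> fv_ab s; rewrite piR_mfunctional mfunctionalB !mfunctionalX fv_ab subrr. Qed.

Lemma ker_piR_fibre f m : ker f -> m \in msupp f ->
  exists2 m', m' \in msupp f & m' != m /\ fact_val atom m' = fact_val atom m.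
Proof.
move=> ker_f f_m; apply: NNPP => no_m'; move: (f_m); rewrite mcoeff_msupp => /eqP; apply.
rewrite -(ker_f (fact_val atom m)) /piR big_mkcond (bigD1_seq m) ?msupp_uniq //= eqxx.
rewrite big1_seq ?addr0 // => m' /andP [neq_m' f_m'].
by case: eqP => // fv_m'; case: no_m'; exists m'.
Qed.

Definition ideal_span (G : {mpoly R[k]} -> Prop) f :=
  exists s : seq ({mpoly R[k]} * {mpoly R[k]}),
    (forall q, q \in s -> G q.2) /\ f = \sum_(q <- s) q.1 * q.2.

Lemma ideal_span0 G : ideal_span G 0.
Proof. by exists [::]; rewrite big_nil. Qed.

Lemma ideal_span_gen G g : G g -> ideal_span G g.
Proof.
by move=> G_g; exists [:: (1, g)]; split => [q /[!inE] /eqP -> //|]; rewrite big_seq1 mul1r.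
Qed.

Lemma ideal_spanD G f g : ideal_span G f -> ideal_span G g -> ideal_span G (f + g).
Proof.
move=> [s [G_s ->]] [t [G_t ->]]; exists (s ++ t); split; last by rewrite big_cat.
by move=> q; rewrite mem_cat => /orP [/G_s | /G_t].
Qed.

Lemma ideal_spanMl G p f : ideal_span G f -> ideal_span G (p * f).
Proof.
move=> [s [G_s ->]]; exists [seq (p * q.1, q.2) | q <- s]; split.
  by move=> q' /mapP [q q_s ->]; exact: G_s q q_s.
by rewrite big_map mulr_sumr; apply: eq_bigr => q _; rewrite mulrA.
Qed.

Lemma ker_ideal_span G f : (forall g, G g -> ker g) -> ideal_span G f -> ker f.
Proof.
move=> G_ker [s [G_s ->]] t; rewrite piR_mfunctional mfunctional_sum big1_seq // => q /= q_s.
by rewrite -piR_mfunctional (ker_piRM _ (G_ker _ (G_s q q_s))).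
Qed.

Definition homog_ker_le d g := ker g /\ exists e, (e <= d)%N /\ homog_of deg atom e g.

Lemma msupp_binomial a b m : m \in msupp ('X_[a] - 'X_[b] : {mpoly R[k]}) -> m = a \/ m = b.
Proof.
rewrite mcoeff_msupp mcoeffB !mcoeffX.
have [->|_] := eqVneq a m; first by left.
have [->|_] := eqVneq b m; first by right.
by rewrite subrr eqxx.
Qed.

Lemma binomial_mgcd_split a b : 'X_[a] - 'X_[b] =
  'X_[mgcd a b] * ('X_[a - mgcd a b] - 'X_[b - mgcd a b]) :> {mpoly R[k]}.
Proof.
have le_gb : (mgcd a b <= b)%MM by rewrite mgcdC lem_mgcd.
by rewrite mulrBr -!mpolyXD ![(mgcd a b + _)%MM]addmC !submK ?lem_mgcd.
Qed.

Lemma mfunctional_ker_eq0 (phi : 'X_{1..k} -> R) f : ker f ->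
  {in msupp f &, forall m m', fact_val atom m = fact_val atom m' -> phi m = phi m'} ->
  mfunctional phi f = 0.
Proof.
move=> ker_f phi_fibres; rewrite /mfunctional.
pose V := undup [seq fact_val atom m | m <- msupp f].
transitivity (\sum_(m <- msupp f) \sum_(t <- V) (fact_val atom m == t)%:R * (phi m * f@_m)).
  apply: eq_big_seq => m f_m.
  rewrite (bigD1_seq (fact_val atom m)) ?undup_uniq ?mem_undup ?map_f //= eqxx mul1r.
  by rewrite big1 ?addr0 // => t; rewrite eq_sym => /negbTE ->; rewrite mul0r.
rewrite exchange_big big1_seq //= => t; rewrite mem_undup => /mapP [m0 f_m0 ->].
transitivity (phi m0 * piR atom f (fact_val atom m0)); last by rewrite ker_f mulr0.
rewrite /piR mulr_sumr [RHS]big_mkcond; apply: eq_big_seq => m f_m /=.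
by case: eqP => [fv_m|_]; rewrite ?mul0r // mul1r (phi_fibres m m0).
Qed.

Lemma catenary_bound_of_gen_deg_le d : gen_deg_le deg atom ker d -> catenary_bound deg atom d.
Proof.
move=> [_ ker_span] a c fv_ac; apply: NNPP => no_chain.
pose reach m := exists ch, path (cat_step deg atom d) a ch /\ last a ch = m.
have reach_step m m' : reach m -> cat_step deg atom d m m' -> reach m'.
  move=> [ch [path_ch last_ch]] step.
  by exists (rcons ch m'); rewrite rcons_path path_ch last_ch step last_rcons.
pose phi m : R := (asbool (reach m))%:R.
have [s [s_gen bin_eq]] := (ker_span ('X_[a] - 'X_[c])).1 (ker_piR_binomial fv_ac).
have : mfunctional phi ('X_[a] - 'X_[c]) = 0.
  rewrite bin_eq mfunctional_sum big1_seq // => q /= q_s.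
  have [ker_q [e [le_ed homog_q]]] := s_gen q q_s.
  apply: mfunctionalM_eq0 => u; apply: mfunctional_ker_eq0 => // m m' q_m q_m' fv_mm'.
  have step_mm' : cat_step deg atom d (u + m)%MM (u + m')%MM.
    by rewrite cat_stepDl cat_step_gr_size ?homog_q.
  have step_m'm : cat_step deg atom d (u + m')%MM (u + m)%MM.
    by rewrite cat_stepDl cat_step_gr_size ?homog_q.
  by congr (nat_of_bool _)%:R; apply/asboolP/asboolP => /reach_step; apply.
rewrite mfunctionalB !mfunctionalX /phi.
have reach_a : reach a by exists [::].
rewrite (introT (asboolP _) reach_a) (introF (asboolP _) no_chain) subr0.
by move=> /eqP; rewrite oner_eq0.
Qed.

Section CatenaryToGenerators.
Hypothesis deg_fact_val : forall m, deg (fact_val atom m) = gr_size deg atom m.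

Lemma cat_step_generator d a b : cat_step deg atom d a b ->
  homog_ker_le d ('X_[a - mgcd a b] - 'X_[b - mgcd a b]).
Proof.
case/andP => /eqP fv_ab le_d; set g := mgcd a b.
have le_gb : (g <= b)%MM by rewrite /g mgcdC lem_mgcd.
have fv_ab' : fact_val atom (a - g)%MM = fact_val atom (b - g)%MM.
  apply: (@addrI _ (fact_val atom g)).
  by rewrite -!fact_valD ![(g + _)%MM]addmC !submK ?lem_mgcd.
split; first exact: ker_piR_binomial.
exists (gr_size deg atom (a - g)%MM); split.
  by rewrite -gr_diffE (leq_trans _ le_d) ?leq_maxl.
by move=> m /msupp_binomial [->|->] //; rewrite -!deg_fact_val fv_ab'.
Qed.

Lemma cat_path_ideal_span d a ch : path (cat_step deg atom d) a ch ->
  ideal_span (homog_ker_le d) ('X_[a] - 'X_[last a ch]).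
Proof.
elim: ch a => [|b ch IH] a /=; first by rewrite subrr => _; apply: ideal_span0.
case/andP => step_ab path_ch.
have -> : 'X_[a] - 'X_[last b ch] = ('X_[a] - 'X_[b]) + ('X_[b] - 'X_[last b ch]) :> {mpoly R[k]}.
  by rewrite addrA subrK.
apply: ideal_spanD (IH _ path_ch); rewrite binomial_mgcd_split.
by apply/ideal_spanMl/ideal_span_gen/cat_step_generator.
Qed.

Lemma ker_ideal_span_of_catenary d f : catenary_bound deg atom d -> ker f ->
  ideal_span (homog_ker_le d) f.
Proof.
move=> bound_d; have [N] := ubnP (size (msupp f)); elim: N f => // N IH f size_f ker_f.
case f_supp: (msupp f) size_f => [|m r] size_f.
  by rewrite (msuppnil0 f_supp); apply: ideal_span0.
have f_m : m \in msupp f by rewrite f_supp mem_head.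
have [m' f_m' [neq_m'm fv_m'm]] := ker_piR_fibre ker_f f_m.
pose f' := f - (f@_m)%:MP * ('X_[m] - 'X_[m']).
have ker_f' : ker f' by apply: ker_piRB => //; apply/ker_piRM/ker_piR_binomial.
have supp_f' : {subset msupp f' <= rem m (msupp f)}.
  have -> : f' = (f - f@_m *: 'X_[m]) + f@_m *: 'X_[m'].
    by rewrite /f' mul_mpolyC scalerBr opprB addrA [RHS]addrAC.
  move=> x /msuppD_le; rewrite mem_cat => /orP [|/msuppZ_le].
    by rewrite (perm_mem (msupp_rem f m)).
  by rewrite msuppX inE => /eqP ->; rewrite mem_rem_uniq ?msupp_uniq // inE neq_m'm.
have size_f' : (size (msupp f') < N)%N.
  apply: leq_ltn_trans (uniq_leq_size (msupp_uniq f') supp_f') _.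
  by rewrite f_supp /= eqxx.
have [ch [path_ch last_ch]] := bound_d m m' (esym fv_m'm).
rewrite -[f](subrK ((f@_m)%:MP * ('X_[m] - 'X_[m']))); apply: ideal_spanD; first exact: IH.
by apply: ideal_spanMl; rewrite -last_ch; apply: cat_path_ideal_span.
Qed.

Lemma gen_deg_le_kerP d : gen_deg_le deg atom ker d <-> catenary_bound deg atom d.
Proof.
split; first exact: catenary_bound_of_gen_deg_le.
move=> bound_d; split=> [g [] // | f]; split; first exact: ker_ideal_span_of_catenary.
by apply: (ker_ideal_span (G := homog_ker_le d)) => g [].
Qed.

End CatenaryToGenerators.
End Kernel.

Theorem corollary3p3 (n : nat) (S : 'rV[int]_n -> Prop) (deg : 'rV[int]_n -> nat)
    (k : nat) (atom : 'I_k -> 'rV[int]_n) (R : comNzRingType) :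
  affine S -> reduced S -> connected_graded S deg ->
  injective atom -> (forall a, is_atom S a <-> exists i, a = atom i) ->
  exists d : nat, is_cat_gr deg atom d /\ is_mu deg atom (@ker_piR n k atom R) d.
Proof.
move=> [S_monoid _] _ [S_graded _] _ atomsE.
have S_atom i : S (atom i) by case: ((atomsE (atom i)).2 (ex_intro _ i erefl)).
have deg_fact_val := graded_deg_fact_val S_monoid S_graded S_atom.
have [d [bound_d least_d]] := ex_least_nat (catenary_bound_exists deg atom).
exists d; split; first by [].
split; first exact/(gen_deg_le_kerP R deg_fact_val).
by move=> d' /(gen_deg_le_kerP R deg_fact_val) /least_d.
Qed.
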